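(* Let $\ell\ge2$, $r_0,\dots,r_\ell\ge1$ integers, $d_0,\dots,d_\ell$ integers with $d_V=\sum_kd_k=0$, $\mathbf{g}\ge1$ an integer. For real $c>\max_k\mu_k$ let $(a_0,a_2,\dots,a_\ell)$ be the unique solution of the linear system in the context, and put $\Sigma_1(c)=\sum_{j=2}^\ell a_jr_j$, $\Sigma_2(c)=\sum_{j=2}^\ell a_jd_j$. Then, as $c\to+\infty$, $\Sigma_1$ and $\Sigma_2$ have expansions $\Sigma_1=\sum_{i\ge1}u_ic^{-i}$, $\Sigma_2=\sum_{i\ge1}v_ic^{-i}$, and with $\mu_{01}=\frac{d_0+d_1}{r_0+r_1}$ the coefficients satisfy $u_1=4r_V^2\mu_{01}$, $(r_V+2)u_2-2\mu_{01}u_1-2v_1=4(r_V+2)(\mathbf{g}-1)r_V\mu_{01}$, and for all $i\ge1$: $(r_V+2)u_{i+2}-2\mu_{01}u_{i+1}-2v_{i+1}+\frac{r_V+2}{r_V+1}\mu_{01}v_i=0$.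
   Context: $\mu_k=d_k/r_k$, $r_V=\sum_kr_k$, $\pi_R=\prod_k(r_k-1)!$. For $1\le j\ne k\le\ell$: $\alpha_0=\frac{\pi_R}{r_V!}(cr_V-d_V)$, $\alpha_j=\frac{\pi_R}{(r_V+1)!}r_j(c(r_V+1)-d_V-\mu_j)$, $\alpha_{jk}=\frac{\pi_R}{(r_V+2)!}r_jr_k(c(r_V+2)-d_V-\mu_j-\mu_k)$, $\alpha_{jj}=\frac{\pi_R}{(r_V+2)!}r_j(r_j+1)(c(r_V+2)-d_V-2\mu_j)$, $\beta_0=\frac{\pi_R}{(r_V-1)!}((r_V-1)r_Vc+2(1-\mathbf{g})-(r_V-1)d_V)$, $\beta_j=\frac{\pi_Rr_j}{r_V!}(r_V(r_V-1)c+2(1-\mathbf{g})-d_V(r_V-2)-r_V\mu_j)$. The linear system for $(a_0,a_2,\dots,a_\ell)$ is: $a_0\alpha_k+\sum_{j=2}^\ell a_j\alpha_{jk}=2\beta_k$ for $k=2,\dots,\ell$, and $a_0\alpha_0+\sum_{j=2}^\ell a_j\alpha_j=2\beta_0$. *)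

From HB Require Import structures.
From mathcomp Require Import all_boot all_order all_algebra.
From mathcomp Require Import all_classical all_reals all_analysis.
Set Implicit Arguments. Unset Strict Implicit. Unset Printing Implicit Defensive.
Import Order.TTheory GRing.Theory Num.Theory.
Import numFieldNormedType.Exports.
Local Open Scope classical_set_scope.
Local Open Scope ring_scope.

(* Indices k range over 0..l; data r d : nat -> _ (only values at k <= l matter). *)
Section Defs.
Variable (R : realType) (l : nat) (r : nat -> nat) (d : nat -> int) (g : nat).

Definition rV : nat := (\sum_(k < l.+1) r k)%N.
Definition dV : int := \sum_(k < l.+1) d k.
Definition mu (k : nat) : R := (d k)%:~R / (r k)%:R.
Definition piR : R := (\prod_(k < l.+1) ((r k).-1)`!)%:R.

Definition alpha0 (c : R) : R :=
  piR / (rV`!)%:R * (c * rV%:R - dV%:~R).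
Definition alpha1 (c : R) (j : nat) : R :=
  piR / ((rV.+1)`!)%:R * (r j)%:R * (c * (rV.+1)%:R - dV%:~R - mu j).
Definition alpha2 (c : R) (j k : nat) : R :=
  if j == k then
    piR / ((rV.+2)`!)%:R * (r j)%:R * ((r j).+1)%:R
      * (c * (rV.+2)%:R - dV%:~R - 2 * mu j)
  else
    piR / ((rV.+2)`!)%:R * (r j)%:R * (r k)%:R
      * (c * (rV.+2)%:R - dV%:~R - mu j - mu k).
Definition beta0 (c : R) : R :=
  piR / ((rV.-1)`!)%:R *
    ((rV.-1)%:R * rV%:R * c + 2 * (1 - g%:R) - (rV.-1)%:R * dV%:~R).
Definition beta1 (c : R) (j : nat) : R :=
  piR * (r j)%:R / (rV`!)%:R *
    (rV%:R * (rV.-1)%:R * c + 2 * (1 - g%:R) - dV%:~R * (rV%:R - 2) - rV%:R * mu j).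

Definition is_solution (c : R) (a0 : R) (a : nat -> R) : Prop :=
  (forall k, (2 <= k <= l)%N ->
     a0 * alpha1 c k + \sum_(2 <= j < l.+1) a j * alpha2 c j k = 2 * beta1 c k)
  /\ a0 * alpha0 c + \sum_(2 <= j < l.+1) a j * alpha1 c j = 2 * beta0 c.

Definition solution_unique (c : R) : Prop :=
  forall a0 a a0' a', is_solution c a0 a -> is_solution c a0' a' ->
    a0 = a0' /\ forall j, (2 <= j <= l)%N -> a j = a' j.

Definition asymp_expansion (f : R -> R) (u : nat -> R) : Prop :=
  forall N : nat,
    (c ^+ N * (f c - \sum_(1 <= i < N.+1) u i / c ^+ i)) @[c --> +oo] --> (0 : R).

End Defs.

From HB Require Import structures.
From mathcomp Require Import all_boot all_order all_algebra.
From mathcomp Require Import all_classical all_reals all_analysis.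
Import Order.TTheory GRing.Theory Num.Theory.
Import numFieldNormedType.Exports.
From mathcomp Require Import ring lra zify.
Set Implicit Arguments. Unset Strict Implicit. Unset Printing Implicit Defensive.
Local Open Scope classical_set_scope.
Local Open Scope ring_scope.

(* Clearing the factorials, row k >= 2 of the system reads
   a_k (c (r_V + 2) - 2 mu_k) = X + mu_k Y with X, Y independent of k. Weighting these rows
   by r_k, summing, and comparing with row 0 (using d_V = 0) forces X = - mu_01 Y, hence
   a_k = Y (mu_k - mu_01) / (c (r_V + 2) - 2 mu_k), while row 0 expresses Y affinely in
   Sigma_1, Sigma_2 with coefficients rational in 1/c. So Y, Sigma_1 and Sigma_2 are rational
   functions of t = 1/c that are regular at t = 0 (the last two vanishing there), their Taylor
   coefficients at t = 0 give the asymptotic expansions, and the identity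
   2 Sigma_2 - (r_V + 2) c Sigma_1 = r_V mu_01 Y, a linear relation with polynomial
   coefficients in t, becomes the stated recurrence between the coefficients. *)

Section TruncatedQuotient.
Variable F : fieldType.
Implicit Types p q : {poly F}.

(* For p`_0 != 0, the truncation at degree n of the power series q / p. *)
Fixpoint series_quot p q n : {poly F} :=
  if n is n'.+1 then
    series_quot p q n' + ((q - p * series_quot p q n')`_n / p`_0) *: 'X^n
  else (q`_0 / p`_0)%:P.

Definition series_coef p q j := (series_quot p q j)`_j.

Lemma series_quotS p q n : series_quot p q n.+1
  = series_quot p q n + ((q - p * series_quot p q n)`_n.+1 / p`_0) *: 'X^(n.+1).
Proof. by []. Qed.

Lemma series_coef0 p q : series_coef p q 0 = q`_0 / p`_0.
Proof. by rewrite /series_coef /= coefC. Qed.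

Lemma size_series_quot p q n : (size (series_quot p q n) <= n.+1)%N.
Proof.
elim: n => [|n IH]; first exact: size_polyC_leq1.
rewrite series_quotS (leq_trans (size_polyD _ _)) // geq_max (leq_trans IH) //.
by rewrite (leq_trans (size_scale_leq _ _)) // size_polyXn.
Qed.

Lemma series_quotE p q n : series_quot p q n = \poly_(i < n.+1) series_coef p q i.
Proof.
elim: n => [|n IH].
  by apply/polyP => -[|i]; rewrite coef_poly /series_coef //= coefC.
rewrite series_quotS [RHS]poly_def big_ord_recr /= -poly_def -IH; congr (_ + _ *: _).
rewrite /series_coef series_quotS coefD coefZ coefXn eqxx mulr1.
by rewrite [(series_quot p q n)`_n.+1]nth_default ?add0r ?size_series_quot.
Qed.

Lemma coef_series_quot p q n i : (i <= n)%N -> (series_quot p q n)`_i = series_coef p q i.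
Proof. by move=> le_in; rewrite series_quotE coef_poly ltnS le_in. Qed.

Lemma dvdXp_coef0 p : ('X %| p)%R = (p`_0 == 0).
Proof. by rewrite -['X]subr0 dvdp_XsubCl /root horner_coef0. Qed.

Lemma series_quotP p q n : p`_0 != 0 -> ('X^(n.+1) %| q - p * series_quot p q n)%R.
Proof.
move=> p0; elim: n => [|n IH].
  by rewrite expr1 dvdXp_coef0 coefB coef0M coefC /= mulrC divfK // subrr.
move: IH; rewrite dvdp_eq => /eqP remE.
set D := _ %/ _ in remE.
set k := (q - p * series_quot p q n)`_n.+1 / p`_0.
have D0 : D`_0 = (q - p * series_quot p q n)`_n.+1 by rewrite remE coefMXn ltnn subnn.
have -> : q - p * series_quot p q n.+1 = (D - k *: p) * 'X^(n.+1).
  by rewrite series_quotS -/k mulrDr opprD addrA remE mulrBl -scalerAr scalerAl.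
rewrite exprS dvdp_mul2r ?expf_neq0 ?polyX_eq0 // dvdXp_coef0.
by rewrite coefB coefZ D0 /k divfK // subrr.
Qed.

Lemma coprimep_Xn p m : p`_0 != 0 -> coprimep ('X^m) p.
Proof.
move=> p0; apply/coprimep_expl; rewrite coprimep_sym -['X]subr0 coprimep_XsubC.
by rewrite /root horner_coef0.
Qed.

Lemma coef_dvdXn p m i : ('X^m %| p)%R -> (i < m)%N -> p`_i = 0.
Proof. by move=> /divpK <- lt_im; rewrite coefMXn lt_im. Qed.

End TruncatedQuotient.

Arguments series_quot : simpl never.

Section RationalGerms.
Variable R : realFieldType.
Implicit Types (f g : R -> R) (p q : {poly R}).

Definition rat_at_oo (vanish : bool) f := exists p q,
  [/\ p`_0 != 0, vanish -> q`_0 = 0 & \forall c \near +oo, p.[c^-1] * f c = q.[c^-1]].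

Lemma rat_at_ooW z f : rat_at_oo true f -> rat_at_oo z f.
Proof. by move=> [p [q [p0 q0 fE]]]; exists p, q; split=> // _; apply: q0. Qed.

Lemma rat_at_oo_near_eq z f g :
  rat_at_oo z f -> (\forall c \near +oo, f c = g c) -> rat_at_oo z g.
Proof.
move=> [p [q [p0 q0 fE]]] fg; exists p, q; split=> //.
by apply: filterS2 fg fE => c <-.
Qed.

Lemma rat_at_oo_cst a : rat_at_oo false (fun=> a).
Proof.
exists 1, a%:P; split=> //; first by rewrite coefC oner_eq0.
by apply: nearW => c; rewrite !hornerC mul1r.
Qed.

Lemma rat_at_oo_inv_lin A B : 0 < A -> rat_at_oo true (fun c => (c * A - B)^-1).
Proof.
move=> A_gt0; exists (A%:P - B *: 'X), 'X; split.
- by rewrite coefB coefC coefZ coefX mulr0 subr0 gt_eqF.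
- by rewrite coefX.
near=> c.
have c_gt0 : 0 < c by near: c; apply: nbhs_pinfty_gt; rewrite num_real.
have cAB_gt0 : 0 < c * A - B.
  by rewrite subr_gt0 -ltr_pdivrMr //; near: c; apply: nbhs_pinfty_gt; rewrite num_real.
rewrite hornerD hornerN hornerC hornerZ hornerX; field.
by rewrite !gt_eqF.
Unshelve. all: by end_near.
Qed.

Lemma rat_at_oo_inv : rat_at_oo true (fun c : R => c^-1).
Proof.
apply: (rat_at_oo_near_eq (rat_at_oo_inv_lin 0 ltr01)).
by apply: nearW => c; rewrite mulr1 subr0.
Qed.

Lemma rat_at_oo_add z f g :
  rat_at_oo z f -> rat_at_oo z g -> rat_at_oo z (fun c => f c + g c).
Proof.
move=> [p1 [q1 [p10 q10 fE]]] [p2 [q2 [p20 q20 gE]]].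
exists (p1 * p2), (p2 * q1 + p1 * q2); split.
- by rewrite coef0M mulf_neq0.
- by move=> zT; rewrite coefD !coef0M q10 // q20 // !mulr0 addr0.
apply: filterS2 fE gE => c fE gE.
by rewrite hornerD !hornerM -fE -gE; ring.
Qed.

Lemma rat_at_oo_mul z1 z2 f g :
  rat_at_oo z1 f -> rat_at_oo z2 g -> rat_at_oo (z1 || z2) (fun c => f c * g c).
Proof.
move=> [p1 [q1 [p10 q10 fE]]] [p2 [q2 [p20 q20 gE]]].
exists (p1 * p2), (q1 * q2); split.
- by rewrite coef0M mulf_neq0.
- by rewrite coef0M => /orP[/q10 | /q20] ->; rewrite ?mul0r ?mulr0.
apply: filterS2 fE gE => c fE gE.
by rewrite !hornerM -fE -gE; ring.
Qed.

Lemma rat_at_oo_sum z (I : Type) (s : seq I) (F : I -> R -> R) :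
  (forall i, rat_at_oo z (F i)) -> rat_at_oo z (fun c => \sum_(i <- s) F i c).
Proof.
move=> FE; elim: s => [|i s IH].
  exists 1, 0; split; [by rewrite coefC oner_eq0 | by rewrite coef0 |].
  by apply: nearW => c; rewrite big_nil horner0 mulr0.
apply: (rat_at_oo_near_eq (rat_at_oo_add (FE i) IH)).
by apply: nearW => c; rewrite big_cons.
Qed.

Lemma rat_at_oo_solve z H k Y : rat_at_oo true H -> rat_at_oo z k ->
  (\forall c \near +oo, Y c * (1 + H c) = k c) -> rat_at_oo z Y.
Proof.
move=> [p1 [q1 [p10 q10 HE]]] [p2 [q2 [p20 q20 kE]]] YE.
exists (p2 * (p1 + q1)), (p1 * q2); split.
- by rewrite coef0M coefD q10 // addr0 mulf_neq0.
- by move=> zT; rewrite coef0M q20 // mulr0.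
apply: filterS3 HE kE YE => c HE kE YE.
by rewrite !hornerM hornerD -kE -YE -HE; ring.
Qed.

Lemma poly_eq0_near_oo p : (\forall c \near +oo, p.[c^-1] = 0) -> p = 0.
Proof.
move=> [M [_ pE]]; set M1 := `|M| + 1.
have M_lt : M < M1 by rewrite /M1 (le_lt_trans (ler_norm M)) // ltrDl.
have M1_gt0 : 0 < M1 by rewrite /M1 ltr_pwDr.
apply: (@roots_geq_poly_eq0 _ p [seq (M1 + i%:R)^-1 | i <- iota 0 (size p)]).
- apply/allP => _ /mapP [i _ ->]; rewrite /root pE //.
  by rewrite (lt_le_trans M_lt) // lerDl.
- rewrite map_inj_uniq ?iota_uniq // => i j /invr_inj /addrI /eqP.
  by rewrite eqr_nat => /eqP.
- by rewrite size_map size_iota.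
Qed.

End RationalGerms.

Lemma series_quot_lin_rel (R : realFieldType) (f1 f2 : R -> R) (p1 q1 p2 q2 a b e : {poly R}) :
  p1`_0 != 0 -> p2`_0 != 0 ->
  (\forall c \near +oo, p1.[c^-1] * f1 c = q1.[c^-1]) ->
  (\forall c \near +oo, p2.[c^-1] * f2 c = q2.[c^-1]) ->
  (\forall c \near +oo, a.[c^-1] * f1 c + b.[c^-1] * f2 c = e.[c^-1]) ->
  forall n, ('X^(n.+1) %| a * series_quot p1 q1 n + b * series_quot p2 q2 n - e)%R.
Proof.
move=> p10 p20 f1E f2E abE n.
set W1 := series_quot p1 q1 n; set W2 := series_quot p2 q2 n.
set Z := p2 * a * q1 + p1 * b * q2 - p1 * p2 * e.
have Z0 : Z = 0.
  apply: poly_eq0_near_oo; apply: filterS3 f1E f2E abE => c f1E f2E abE.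
  by rewrite !(hornerD, hornerN, hornerM) -f1E -f2E -abE; ring.
have p12 : (p1 * p2)`_0 != 0 by rewrite coef0M mulf_neq0.
rewrite -(Gauss_dvdpr _ (coprimep_Xn _ p12)).
have -> : p1 * p2 * (a * W1 + b * W2 - e) =
    Z - (p2 * a * (q1 - p1 * W1) + p1 * b * (q2 - p2 * W2)) by rewrite /Z; ring.
by rewrite Z0 sub0r dvdpNr dvdp_add // dvdp_mull // series_quotP.
Qed.

Lemma rat_at_oo_asymp_expansion (R : realType) (f : R -> R) (p q : {poly R}) :
  p`_0 != 0 -> q`_0 = 0 -> (\forall c \near +oo, p.[c^-1] * f c = q.[c^-1]) ->
  asymp_expansion f (series_coef p q).
Proof.
move=> p0 q0 fE N.
(* With q - p W = D X^(N+1), the remainder c^N (f c - W(1/c)) is (1/c) D(1/c) / p(1/c). *)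
set W := series_quot p q N.
have [D remE] : exists D, q - p * W = D * 'X^(N.+1).
  by exists ((q - p * W) %/ 'X^(N.+1)); rewrite divpK // series_quotP.
have WE c : \sum_(1 <= i < N.+1) series_coef p q i / c ^+ i = W.[c^-1].
  rewrite /W series_quotE horner_poly.
  rewrite -(big_mkord xpredT (fun i => series_coef p q i * c^-1 ^+ i)).
  rewrite big_ltn // series_coef0 q0 !mul0r add0r.
  by apply: eq_big_nat => i _; rewrite exprVn.
have inv0 : c^-1 @[c --> +oo] --> (0 : R).
  apply/gtr0_cvgV0; last exact: cvg_id.
  by apply: nbhs_pinfty_gt; rewrite num_real.
have hornerV0 (P : {poly R}) : P.[c^-1] @[c --> +oo] --> P.[0].
  exact: (cvg_comp (fun c => c^-1) (horner P) inv0 (@continuous_horner R P 0)).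
have p0_neq0 : p.[0] != 0 by rewrite horner_coef0.
have p_near_neq0 : \forall c \near +oo, p.[c^-1] != 0.
  by apply: cvgr_neq0 (hornerV0 p) p0_neq0.
have lim0 : c^-1 * D.[c^-1] / p.[c^-1] @[c --> +oo] --> (0 : R).
  rewrite -[0](mul0r (D.[0] / p.[0])) mulrA.
  by apply: cvgM; [apply: cvgM|apply: cvgV].
apply: cvg_trans lim0; apply: near_eq_cvg; near=> c.
have c_gt0 : 0 < c by near: c; apply: nbhs_pinfty_gt; rewrite num_real.
have pc : p.[c^-1] != 0 by near: c.
rewrite /= WE.
have -> : f c = q.[c^-1] / p.[c^-1] by rewrite -(near fE c) // mulrAC divff // mul1r.
have := congr1 (horner^~ c^-1) remE; rewrite /= hornerD hornerN !hornerM hornerXn.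
move=> /(canRL (subrK _)) ->.
rewrite exprS exprVn; field.
by rewrite pc expf_neq0 gt_eqF.
Unshelve. all: by end_near.
Qed.

Lemma series_coef_quad_rel (R : realFieldType) (f1 f2 : R -> R) (p1 q1 p2 q2 : {poly R})
    (x0 x1 y1 y2 e1 e2 : R) :
  p1`_0 != 0 -> p2`_0 != 0 -> q1`_0 = 0 -> q2`_0 = 0 ->
  (\forall c \near +oo, p1.[c^-1] * f1 c = q1.[c^-1]) ->
  (\forall c \near +oo, p2.[c^-1] * f2 c = q2.[c^-1]) ->
  (\forall c \near +oo,
     (x0 + x1 / c) * f1 c + (y1 / c + y2 / c ^+ 2) * f2 c = e1 / c + e2 / c ^+ 2) ->
  let u := series_coef p1 q1 in let v := series_coef p2 q2 in
  [/\ x0 * u 1%N = e1, x0 * u 2%N + x1 * u 1%N + y1 * v 1%N = e2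
    & forall j, x0 * u j.+3 + x1 * u j.+2 + y1 * v j.+2 + y2 * v j.+1 = 0].
Proof.
move=> p10 p20 q10 q20 f1E f2E relE u v.
set a := x0%:P + x1 *: 'X; set b := y1 *: 'X + y2 *: 'X^2; set e := e1 *: 'X + e2 *: 'X^2.
have polyE : \forall c \near +oo, a.[c^-1] * f1 c + b.[c^-1] * f2 c = e.[c^-1].
  apply: filterS relE => c.
  by rewrite /a /b /e !(hornerD, hornerZ, hornerC, hornerX, hornerXn) exprVn.
have u0 : u 0%N = 0 by rewrite /u series_coef0 q10 mul0r.
have v0 : v 0%N = 0 by rewrite /v series_coef0 q20 mul0r.
have coef_rel j : x0 * u j.+1 + x1 * u j + y1 * v j + y2 * v j.-1
    = e1 * (j == 0%N)%:R + e2 * (j == 1%N)%:R.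
  have := coef_dvdXn (series_quot_lin_rel p10 p20 f1E f2E polyE j.+1) (ltnSn j.+1).
  have W1E := @coef_series_quot _ p1 q1 j.+1; have W2E := @coef_series_quot _ p2 q2 j.+1.
  move: (series_quot p1 q1 j.+1) (series_quot p2 q2 j.+1) W1E W2E => W1 W2 W1E W2E.
  rewrite /a /b /e !(coefB, coefD, mulrDl, coefCM, coefXM, coefXnM, coefZ, =^~scalerAl).
  rewrite !coefX !W1E ?W2E ?leq_subr // => /eqP; rewrite subr_eq0 => /eqP <-.
  by clear W1E W2E; case: j => [|j]; rewrite /= -/u -/v ?v0 ?subSS ?subn0 ?mulr0 ?addr0 ?addrA.
split.
- by have := coef_rel 0%N; rewrite u0 v0 !mulr0 !addr0 mulr1.
- by have := coef_rel 1%N; rewrite v0 mulr0 addr0 mulr0 add0r mulr1.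
- by move=> j; have := coef_rel j.+2; rewrite !mulr0 addr0.
Qed.

Lemma eq_of_sub_scale (R : comPzRingType) (k x y z w : R) :
  z = w -> x - y = k * (z - w) -> x = y.
Proof. by move=> zw xyE; apply/eqP; rewrite -subr_eq0 xyE zw subrr mulr0. Qed.

Lemma sum_nat_delta (R : nzSemiRingType) (m n k : nat) (a : nat -> R) :
  (m <= k < n)%N -> \sum_(m <= j < n) (j == k)%:R * a j = a k.
Proof.
move=> le_mkn; have := big_nat1_eq (@GRing.add R) a k m n; rewrite le_mkn => <-.
by rewrite big_mkcond /=; apply: eq_bigr => j _; case: eqP; rewrite ?mul1r ?mul0r.
Qed.

Section LinearSystem.
Variables (R : realType) (l : nat) (r : nat -> nat) (d : nat -> int) (g : nat).
Hypotheses (l_ge2 : (2 <= l)%N) (r_gt0 : forall k, (k <= l)%N -> (0 < r k)%N)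
  (dV0 : dV l d = 0).

Let n := rV l r.
Let N : R := n%:R.
Let P : R := piR R l r.
Let F : R := (n.-1)`!%:R.
Let mu01 : R := (d 0%N + d 1%N)%:~R / (r 0%N + r 1%N)%:R.

Local Notation mu := (mu R r d).

Lemma rV_split : n = (r 0%N + r 1%N + \sum_(2 <= k < l.+1) r k)%N.
Proof. by rewrite /n /rV -(big_mkord xpredT r) big_ltn // big_ltn ?addnA // ltnW. Qed.

Lemma dV_split : (d 0%N)%:~R + (d 1%N)%:~R + \sum_(2 <= k < l.+1) (d k)%:~R = 0 :> R.
Proof.
move: dV0; rewrite /dV -(big_mkord xpredT d) big_ltn // big_ltn; last lia.
by move=> /(congr1 (fun z : int => z%:~R : R)); rewrite !intrD -mulrz_sumr addrA.
Qed.

Lemma rV_gt0 : (0 < n)%N.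
Proof. by rewrite rV_split !addn_gt0 r_gt0. Qed.

Let N_gt0 : 0 < N. Proof. by rewrite ltr0n rV_gt0. Qed.

Let P_neq0 : P != 0.
Proof. by rewrite pnatr_eq0 -lt0n prodn_gt0 // => i; exact: fact_gt0. Qed.

Let F_neq0 : F != 0. Proof. by rewrite pnatr_eq0 -lt0n fact_gt0. Qed.

Lemma natr_r_neq0 k : (k <= l)%N -> (r k)%:R != 0 :> R.
Proof. by move=> /r_gt0; rewrite pnatr_eq0 -lt0n. Qed.

Lemma d_mu k : (k <= l)%N -> (d k)%:~R = (r k)%:R * mu k :> R.
Proof. by move=> le_kl; rewrite /mu mulrC divfK // natr_r_neq0. Qed.

Let factE0 : (n`!)%:R = N * F.
Proof. by rewrite /N /F -natrM -{1}(prednK rV_gt0) factS prednK // rV_gt0. Qed.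

Let factE1 : ((n.+1)`!)%:R = (N + 1) * (N * F).
Proof. by rewrite factS natrM factE0 /N -natr1. Qed.

Let factE2 : ((n.+2)`!)%:R = (N + 2) * ((N + 1) * (N * F)).
Proof. by rewrite factS natrM factE1 /N -addn2 natrD. Qed.

Let predN : (n.-1)%:R = N - 1 :> R.
Proof. by rewrite /N -{2}(prednK rV_gt0) -natr1 addrK. Qed.

Let dV0R : (dV l d)%:~R = 0 :> R. Proof. by rewrite dV0. Qed.

Lemma alpha0E c : alpha0 l r d c = P / (N * F) * (c * N).
Proof. by rewrite /alpha0 -/n factE0 dV0R subr0. Qed.

Lemma alpha1E c j :
  alpha1 l r d c j = P / ((N + 1) * (N * F)) * (r j)%:R * (c * (N + 1) - mu j).
Proof. by rewrite /alpha1 -/n factE1 dV0R subr0 -natr1. Qed.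

Lemma alpha2E c j k : alpha2 l r d c j k =
  P / ((N + 2) * ((N + 1) * (N * F))) * (r k)%:R *
    ((r j)%:R * (c * (N + 2) - mu j - mu k) + (j == k)%:R * (c * (N + 2) - 2 * mu k)).
Proof.
rewrite /alpha2 -/n factE2 dV0R subr0 -[(n.+2)%:R]natr1 -[(n.+1)%:R]natr1.
by case: eqP => [->|_]; rewrite -?natr1 /=; ring.
Qed.

Lemma beta0E c : beta0 l r d g c = P / F * ((N - 1) * N * c + 2 * (1 - g%:R)).
Proof. by rewrite /beta0 -/n -/F predN dV0R mulr0 subr0. Qed.

Lemma beta1E c j : beta1 l r d g c j =
  P * (r j)%:R / (N * F) * (N * (N - 1) * c + 2 * (1 - g%:R) - N * mu j).
Proof. by rewrite /beta1 -/n factE0 predN dV0R mul0r subr0. Qed.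

Section AtParameter.
Variables (c a0 : R) (a : nat -> R).
Hypotheses (c_gt0 : 0 < c) (mu_lt : forall k, (k <= l)%N -> mu k < c).
Hypothesis sol : is_solution l r d g c a0 a.

Let S1 := \sum_(2 <= j < l.+1) a j * (r j)%:R.
Let S2 := \sum_(2 <= j < l.+1) a j * (d j)%:~R.
Let D k := c * (N + 2) - 2 * mu k.
Let Y := -4 * N * (N + 2) + 4 * (N + 2) * (1 - g%:R) / c - 2 * S1 / N
  + (N + 2) * S2 / (N * (N + 1) * c).
Let X0 := 2 * (N + 1) * (N + 2) * (N * (N - 1) * c + 2 * (1 - g%:R))
  - (N + 2) * (N + 1) * c * a0 - c * (N + 2) * S1 + S2.
Let Y0 := -2 * N * (N + 1) * (N + 2) + (N + 2) * a0 + S1.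

Let S2E : S2 = \sum_(2 <= j < l.+1) a j * (r j)%:R * mu j.
Proof. by apply: eq_big_nat => j le_2jl; rewrite d_mu ?mulrA //; lia. Qed.

Lemma solution_row0 : N * (N + 1) * c * a0 + (N + 1) * c * S1 - S2
  = 2 * N * (N + 1) * ((N - 1) * N * c + 2 * (1 - g%:R)).
Proof.
have := proj2 sol; rewrite alpha0E beta0E.
have -> : \sum_(2 <= j < l.+1) a j * alpha1 l r d c j =
    P / ((N + 1) * (N * F)) * ((N + 1) * c * S1 - S2).
  rewrite S2E mulrBr /S1 !mulr_sumr -sumrB; apply: eq_big_nat => j _.
  by rewrite alpha1E; ring.
move=> row0; apply: (eq_of_sub_scale (k := (N + 1) * (N * F) / P) row0).
by field; rewrite P_neq0 F_neq0 !gt_eqF // ltr_wpDr.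
Qed.

Lemma solution_rowk k : (2 <= k <= l)%N -> a k * D k = X0 + mu k * Y0.
Proof.
move=> le_2kl; have := proj1 sol k le_2kl; rewrite alpha1E beta1E.
set Q := P / ((N + 2) * ((N + 1) * (N * F))).
have -> : \sum_(2 <= j < l.+1) a j * alpha2 l r d c j k =
    Q * (r k)%:R * ((N + 2) * c * S1 - S2 - mu k * S1 + a k * D k).
  have -> : \sum_(2 <= j < l.+1) a j * alpha2 l r d c j k =
      \sum_(2 <= j < l.+1) (Q * (r k)%:R * (c * (N + 2) - mu k) * (a j * (r j)%:R)
        - Q * (r k)%:R * (a j * (r j)%:R * mu j)
        + Q * (r k)%:R * D k * ((j == k)%:R * a j)).
    by apply: eq_big_nat => j _; rewrite alpha2E -/Q /D; ring.
  by rewrite !big_split /= sumrN -!mulr_sumr sum_nat_delta // -S2E -/S1; ring.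
move=> rowk; apply: (eq_of_sub_scale (k := (N + 2) * ((N + 1) * (N * F)) / (P * (r k)%:R)) rowk).
rewrite /Q /D /X0 /Y0; field.
by rewrite P_neq0 F_neq0 natr_r_neq0 ?(gt_eqF N_gt0) ?gt_eqF ?ltr_wpDr //; lia.
Qed.

Let N_X0 : N * X0 = (N + 2) * c * S1 - 2 * S2.
Proof. by apply: (eq_of_sub_scale (k := - (N + 2)) solution_row0); rewrite /X0; ring. Qed.

Lemma solution_X0E : X0 = - mu01 * Y0.
Proof.
have sum_rowk : (N + 2) * c * S1 - 2 * S2
    = (N - (r 0%N)%:R - (r 1%N)%:R) * X0 - ((d 0%N)%:~R + (d 1%N)%:~R) * Y0.
  transitivity (\sum_(2 <= k < l.+1) (r k)%:R * (a k * D k)).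
    rewrite S2E /S1 !mulr_sumr -sumrB.
    by apply: eq_big_nat => k _; rewrite /D; ring.
  transitivity (\sum_(2 <= k < l.+1) (X0 * (r k)%:R + Y0 * (d k)%:~R)).
    by apply: eq_big_nat => k le_kl; rewrite solution_rowk // d_mu; [ring | lia].
  rewrite big_split /= -!mulr_sumr -natr_sum.
  have -> : (\sum_(2 <= k < l.+1) r k)%:R = N - (r 0%N)%:R - (r 1%N)%:R :> R.
    by rewrite /N rV_split !natrD; ring.
  have -> : \sum_(2 <= k < l.+1) (d k)%:~R = - ((d 0%N)%:~R + (d 1%N)%:~R) :> R.
    by have := dV_split; lra.
  ring.
have r01_gt0 : 0 < (r 0%N)%:R + (r 1%N)%:R :> R.
  by rewrite -natrD ltr0n addn_gt0 r_gt0.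
rewrite -N_X0 in sum_rowk.
apply: (eq_of_sub_scale (k := ((r 0%N)%:R + (r 1%N)%:R)^-1) sum_rowk).
by rewrite /mu01 intrD natrD; field; rewrite gt_eqF.
Qed.

Let Y0E : Y0 = Y.
Proof.
apply: (eq_of_sub_scale (k := (N + 2) / (N * (N + 1) * c)) solution_row0).
by rewrite /Y0 /Y; field; rewrite !gt_eqF ?ltr_wpDr.
Qed.

Lemma solution_coef k : (2 <= k <= l)%N -> a k = Y * ((mu k - mu01) / D k).
Proof.
move=> le_2kl; have le_kl : (k <= l)%N by lia.
have D_gt0 : 0 < D k.
  have := mu_lt le_kl; have := mulr_gt0 c_gt0 N_gt0; rewrite /D; lra.
rewrite -[a k](mulfK (lt0r_neq0 D_gt0)) solution_rowk // solution_X0E Y0E.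
by rewrite mulrA mulrBr; congr (_ / _); ring.
Qed.

Lemma solution_sums_rel : 2 * S2 - (N + 2) * c * S1 = N * mu01 * Y.
Proof.
rewrite -Y0E; apply: (eq_of_sub_scale (k := 1) N_X0).
by rewrite solution_X0E; ring.
Qed.

End AtParameter.
End LinearSystem.

Section Expansion.
Variables (R : realType) (l : nat) (r : nat -> nat) (d : nat -> int) (g : nat).
Variables (A0 : R -> R) (A : R -> nat -> R).
Hypotheses (l_ge2 : (2 <= l)%N) (r_gt0 : forall k, (k <= l)%N -> (0 < r k)%N)
  (dV0 : dV l d = 0).
Hypothesis sol : forall c : R, (forall k, (k <= l)%N -> mu R r d k < c) ->
  is_solution l r d g c (A0 c) (A c).

Local Notation mu := (mu R r d).
Let N : R := (rV l r)%:R.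
Let mu01 : R := (d 0%N + d 1%N)%:~R / (r 0%N + r 1%N)%:R.
Let S1 c := \sum_(2 <= j < l.+1) A c j * (r j)%:R.
Let S2 c := \sum_(2 <= j < l.+1) A c j * (d j)%:~R.
Let D k c := c * (N + 2) - 2 * mu k.
Let Y c := -4 * N * (N + 2) + 4 * (N + 2) * (1 - g%:R) / c - 2 * S1 c / N
  + (N + 2) * S2 c / (N * (N + 1) * c).
Let G (w : nat -> R) c := \sum_(2 <= k < l.+1) w k * (D k c)^-1.

Let N_gt0 : 0 < N. Proof. by rewrite ltr0n rV_gt0. Qed.

Lemma solution_near : \forall c \near +oo, [/\ 0 < c, forall k, (k <= l)%N -> mu k < c
  & is_solution l r d g c (A0 c) (A c)].
Proof.
have mu_lt : \forall c \near +oo, forall i : 'I_l.+1, mu i < c.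
  by apply: filter_forall => i; apply: nbhs_pinfty_gt; rewrite num_real.
apply: filterS2 (nbhs_pinfty_gt (num_real 0)) mu_lt => c c_gt0 mu_lt.
suff mu_ltc k : (k <= l)%N -> mu k < c by split=> //; apply: sol.
by move=> le_kl; exact: (mu_lt (Ordinal (le_kl : (k < l.+1)%N))).
Qed.

Let w1 k := (r k)%:R * (mu k - mu01).
Let w2 k := (r k)%:R * mu k * (mu k - mu01).

Lemma sums_near : \forall c \near +oo,
  [/\ S1 c = Y c * G w1 c, S2 c = Y c * G w2 c
    & 2 * S2 c - (N + 2) * c * S1 c = N * mu01 * Y c].
Proof.
apply: filterS solution_near => c [c_gt0 mu_lt solc].
have solE := solution_coef l_ge2 r_gt0 dV0 c_gt0 mu_lt solc.
split; last exact: solution_sums_rel solc.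
- rewrite [in LHS]/S1 /G mulr_sumr; apply: eq_big_nat => k le_2kl.
  by rewrite solE // /w1 /D /Y /S1 /S2 /N /mu01; ring.
- rewrite [in LHS]/S2 /G mulr_sumr; apply: eq_big_nat => k le_2kl.
  by rewrite solE // (d_mu _ _ r_gt0) /w2 /D /Y /S1 /S2 /N /mu01; [ring | lia].
Qed.

Let N2_gt0 : 0 < N + 2. Proof. by rewrite ltr_wpDr. Qed.

Lemma rat_at_oo_G w : rat_at_oo true (G w).
Proof.
apply: (@rat_at_oo_sum _ _ _ _ (fun k c => w k * (D k c)^-1)) => k.
by rewrite /D; exact: rat_at_oo_mul (rat_at_oo_cst (w k)) (rat_at_oo_inv_lin (2 * mu k) N2_gt0).
Qed.

Lemma rat_at_oo_Y : rat_at_oo false Y.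
Proof.
pose H c := 2 / N * G w1 c + (- ((N + 2) / (N * (N + 1))) * c^-1) * G w2 c.
pose K c := -4 * N * (N + 2) + 4 * (N + 2) * (1 - g%:R) * c^-1.
apply: (@rat_at_oo_solve _ _ H K).
- apply: rat_at_oo_add; first exact: rat_at_oo_mul (rat_at_oo_cst _) (rat_at_oo_G _).
  exact: rat_at_oo_mul (rat_at_oo_mul (rat_at_oo_cst _) (rat_at_oo_inv R)) (rat_at_oo_G _).
- apply: rat_at_oo_add; first exact: rat_at_oo_cst.
  exact/rat_at_ooW/(rat_at_oo_mul (rat_at_oo_cst _) (rat_at_oo_inv R)).
apply: filterS2 sums_near (nbhs_pinfty_gt (num_real 0)) => c [S1E S2E _] c_gt0.
have YE : Y c = K c - 2 * (Y c * G w1 c) / N + (N + 2) * (Y c * G w2 c) / (N * (N + 1) * c).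
  by rewrite -S1E -S2E /Y /K.
apply: (eq_of_sub_scale (k := 1) YE); rewrite /H.
by field; rewrite !gt_eqF ?ltr_wpDr.
Qed.

Lemma rat_at_oo_sums : rat_at_oo true S1 /\ rat_at_oo true S2.
Proof.
split.
- apply: (rat_at_oo_near_eq (rat_at_oo_mul rat_at_oo_Y (rat_at_oo_G w1))).
  by apply: filterS sums_near => c [].
- apply: (rat_at_oo_near_eq (rat_at_oo_mul rat_at_oo_Y (rat_at_oo_G w2))).
  by apply: filterS sums_near => c [].
Qed.

Lemma sums_relation : \forall c \near +oo,
  (N + 2 + -2 * mu01 / c) * S1 c + (-2 / c + (N + 2) / (N + 1) * mu01 / c ^+ 2) * S2 c
    = (N + 2) * (4 * N ^+ 2 * mu01) / c + 4 * (N + 2) * (g%:R - 1) * N * mu01 / c ^+ 2.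
Proof.
apply: filterS2 sums_near (nbhs_pinfty_gt (num_real 0)) => c [_ _ relc] c_gt0.
apply: (eq_of_sub_scale (k := - c^-1) relc); rewrite /Y.
by field; rewrite !gt_eqF ?ltr_wpDr.
Qed.

End Expansion.

Theorem lemma3p17 (R : realType) (l : nat) (r : nat -> nat) (d : nat -> int)
  (g : nat) (A0 : R -> R) (A : R -> nat -> R) :
  (2 <= l)%N ->
  (forall k, (k <= l)%N -> (1 <= r k)%N) ->
  dV l d = 0 ->
  (1 <= g)%N ->
  (forall c : R, (forall k, (k <= l)%N -> mu R r d k < c) ->
     solution_unique l r d g c /\ is_solution l r d g c (A0 c) (A c)) ->
  let rVR : R := (rV l r)%:R in
  let mu01 : R := (d 0%N + d 1%N)%:~R / (r 0%N + r 1%N)%:R in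
  let S1 : R -> R := fun c => \sum_(2 <= j < l.+1) A c j * (r j)%:R in
  let S2 : R -> R := fun c => \sum_(2 <= j < l.+1) A c j * (d j)%:~R in
  exists u v : nat -> R,
    asymp_expansion S1 u /\ asymp_expansion S2 v /\
    u 1%N = 4 * rVR ^+ 2 * mu01 /\
    (rVR + 2) * u 2%N - 2 * mu01 * u 1%N - 2 * v 1%N
      = 4 * (rVR + 2) * (g%:R - 1) * rVR * mu01 /\
    (forall i : nat, (1 <= i)%N ->
       (rVR + 2) * u i.+2 - 2 * mu01 * u i.+1 - 2 * v i.+1
         + (rVR + 2) / (rVR + 1) * mu01 * v i = 0).
Proof.
move=> l_ge2 r_gt0 dV0 _ hsol rVR mu01 S1 S2.
have sol c mu_lt := (hsol c mu_lt).2.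
have [[p1 [q1 [p10 /(_ isT) q10 S1E]]] [p2 [q2 [p20 /(_ isT) q20 S2E]]]] :=
  rat_at_oo_sums l_ge2 r_gt0 dV0 sol.
have [u1E u2E uE] := series_coef_quad_rel p10 p20 q10 q20 S1E S2E
  (sums_relation l_ge2 r_gt0 dV0 sol).
exists (series_coef p1 q1), (series_coef p2 q2).
split; first exact: rat_at_oo_asymp_expansion.
split; first exact: rat_at_oo_asymp_expansion.
have rV2_gt0 : 0 < rVR + 2 by rewrite /rVR -natrD ltr0n addn2.
split; first by apply: (mulfI (lt0r_neq0 rV2_gt0)).
rewrite /rVR /mu01 in rV2_gt0 *.
split; first by rewrite -u2E; ring.
by case=> // i _; rewrite -[RHS](uE i); ring.
Qed.
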